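(* Let $\mathbb{X}$ be a finite-dimensional Banach space and $n\in\mathbb{N}$. Let $T\in\mathbb{L}(\mathbb{X},\ell_\infty^n)$ with $\|T\|=1$. Then $T$ is $k$-smooth if and only if $M_{T^*}\cap\operatorname{Ext}(B_{\ell_1^n})=\{\pm e_1,\pm e_2,\ldots,\pm e_r\}$ for some $1\leq r\leq n$, $T^*e_i$ is $m_i$-smooth in $\mathbb{X}^*$ for each $1\leq i\leq r$, and $m_1+m_2+\cdots+m_r=k$.
   Context: The dual of $\ell_\infty^n$ is identified with $\ell_1^n$, so the adjoint is $T^*\in\mathbb{L}(\ell_1^n,\mathbb{X}^* )$; $e_1,\ldots,e_n$ is the standard basis of $\ell_1^n$. $B_{\ell_1^n}$ is the closed unit ball and $\operatorname{Ext}$ denotes its extreme points. For an operator $S$, $M_S=\{x:\|x\|=1,\ \|Sx\|=\|S\|\}$. For a Banach space $\mathbb{Z}$ and a unit vector $z$, $J(z)=\{f\in \mathbb{Z}^*:\|f\|=1,\ f(z)=1\}$; $z$ is $k$-smooth if $\dim\operatorname{span} J(z)=k$ (for $T$, in the space $\mathbb{L}(\mathbb{X},\ell_\infty^n)$ with operator norm). *)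

From HB Require Import structures.
From mathcomp Require Import all_boot all_order all_algebra.
From mathcomp Require Import mathcomp_extra boolp classical_sets reals.
Set Implicit Arguments. Unset Strict Implicit. Unset Printing Implicit Defensive.
Import Order.TTheory GRing.Theory Num.Theory.
Local Open Scope ring_scope.
Local Open Scope classical_set_scope.

(* Model: a finite-dimensional real Banach space X is (R^d, NX) (row vectors)
   with an arbitrary norm NX.  Linear functionals on a matrix space
   'M_(p,q) are represented by matrices through the pairing <F, A> =
   sum_{i,j} F i j * A i j; in particular X^* = ('rV_d, dual_norm NX),
   L(X, l_inf^n) = 'M_(d,n) acting by x |-> x *m T, and
   l_1^n = ('rV_n, l1norm), whose dual is l_inf^n. *)

Section Defs.
Variable R : realType.

Definition is_norm (V : lmodType R) (N : V -> R) : Prop :=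
  [/\ forall x, 0 <= N x,
      forall x, N x = 0 -> x = 0,
      forall (a : R) x, N (a *: x) = `|a| * N x &
      forall x y, N (x + y) <= N x + N y].

Definition pair (p q : nat) (F A : 'M[R]_(p, q)) : R :=
  \sum_(i < p) \sum_(j < q) F i j * A i j.

Definition opnorm (U V : Type) (N1 : U -> R) (N2 : V -> R) (f : U -> V) : R :=
  sup [set N2 (f x) | x in [set x | N1 x <= 1]].

Definition dual_norm (p q : nat) (N : 'M[R]_(p, q) -> R) (F : 'M[R]_(p, q)) : R :=
  opnorm N (fun r : R => `|r|) (pair F).

Definition linf_norm (n : nat) (v : 'rV[R]_n) : R := \big[Num.max/0]_(i < n) `|v 0 i|.
Definition l1_norm (n : nat) (v : 'rV[R]_n) : R := \sum_(i < n) `|v 0 i|.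

Definition Lnorm (d n : nat) (NX : 'rV[R]_d -> R) (T : 'M[R]_(d, n)) : R :=
  opnorm NX (@linf_norm n) (fun x => x *m T).

(* adjoint T^* : l_1^n -> X^*,  (T^* g)(x) = g(T x) *)
Definition adj (d n : nat) (T : 'M[R]_(d, n)) (g : 'rV[R]_n) : 'rV[R]_d := g *m T^T.

Definition Mset (U V : Type) (N1 : U -> R) (N2 : V -> R) (f : U -> V) : set U :=
  [set x | N1 x = 1 /\ N2 (f x) = opnorm N1 N2 f].

Definition Ext (V : lmodType R) (C : set V) : set V :=
  [set x | C x /\ forall (y z : V) (t : R), C y -> C z -> 0 < t < 1 ->
             x = t *: y + (1 - t) *: z -> y = x /\ z = x].

Definition ball_l1 (n : nat) : set 'rV[R]_n := [set v | l1_norm v <= 1].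

Definition Jset (p q : nat) (N : 'M[R]_(p, q) -> R) (z : 'M[R]_(p, q)) :
  set 'M[R]_(p, q) := [set F | dual_norm N F = 1 /\ pair F z = 1].

Definition dim_span (V : vectType R) (S : set V) (k : nat) : Prop :=
  exists s : seq V, (forall x, x \in s -> S x) /\
    (forall x, S x -> x \in <<s>>%VS) /\ \dim <<s>>%VS = k.

Definition k_smooth (p q : nat) (N : 'M[R]_(p, q) -> R) (z : 'M[R]_(p, q)) (k : nat)
  : Prop := N z = 1 /\ dim_span (Jset N z) k.

End Defs.

From Pilot Require Import Defs.
From HB Require Import structures.
From mathcomp Require Import all_boot all_order all_algebra.
From mathcomp Require Import mathcomp_extra boolp classical_sets reals.
From mathcomp Require Import topology normedtype derive.
From mathcomp Require Import ring lra.
Import Order.TTheory GRing.Theory Num.Theory.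
Import numFieldNormedType.Exports.
Set Implicit Arguments. Unset Strict Implicit. Unset Printing Implicit Defensive.
Local Open Scope ring_scope.
Local Open Scope classical_set_scope.

(* The norm of T : X -> l_inf^n is the largest of the dual norms of its
   columns T^* e_j, and the dual of this operator norm is the l_1-sum of the
   bidual norms of the columns.  So for a support functional F of T with
   columns F_j, sum_j F_j(T^* e_j) = F(T) = 1 = sum_j ||F_j|| while each term
   satisfies F_j(T^* e_j) <= ||F_j||; hence every nonzero F_j is a positive
   multiple of a support functional of T^* e_j and occurs only where
   ||T^* e_j|| = 1.  Conversely a support functional of such a T^* e_j, put in
   column j, supports T.  Thus span J(T) is the direct sum over these j of the
   spans of J(T^* e_j), and the dimensions add up.  On the l_1 side the extreme
   points of the unit ball are the +-e_j, and T^*, of norm 1, attains its norm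
   at +-e_j exactly for those j. *)

Section IsNorm.
Variables (R : realType) (V : lmodType R) (N : V -> R).
Hypothesis hN : is_norm N.

Lemma is_norm_ge0 x : 0 <= N x. Proof. by case: hN. Qed.

Lemma is_norm_eq0 x : N x = 0 -> x = 0. Proof. by case: hN => _ /(_ x). Qed.

Lemma is_normZ a x : N (a *: x) = `|a| * N x. Proof. by case: hN. Qed.

Lemma is_normD x y : N (x + y) <= N x + N y. Proof. by case: hN. Qed.

Lemma is_norm_gt0 x : x != 0 -> 0 < N x.
Proof.
move=> x0; rewrite lt_def is_norm_ge0 andbT.
by apply: contraTneq x0 => /is_norm_eq0 ->; rewrite eqxx.
Qed.

Lemma is_norm0 : N 0 = 0.
Proof. by rewrite -(scale0r (0 : V)) is_normZ normr0 mul0r. Qed.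

Lemma is_normN x : N (- x) = N x.
Proof. by rewrite -scaleN1r is_normZ normrN normr1 mul1r. Qed.

Lemma is_norm_sum (I : Type) (s : seq I) (F : I -> V) :
  N (\sum_(i <- s) F i) <= \sum_(i <- s) N (F i).
Proof.
elim: s => [|a s IH]; first by rewrite !big_nil is_norm0.
by rewrite !big_cons (le_trans (is_normD _ _)) // lerD2l.
Qed.

End IsNorm.

Section Pairing.
Variables (R : realType) (p q : nat).
Implicit Types F G A B : 'M[R]_(p, q).

Lemma pairC F A : pair F A = pair A F.
Proof. by apply: eq_bigr => i _; apply: eq_bigr => j _; rewrite mulrC. Qed.

Lemma pairDr F A B : pair F (A + B) = pair F A + pair F B.
Proof.
rewrite /pair -big_split /=; apply: eq_bigr => i _.
by rewrite -big_split; apply: eq_bigr => j _; rewrite mxE mulrDr.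
Qed.

Lemma pairZr F A a : pair F (a *: A) = a * pair F A.
Proof.
rewrite /pair mulr_sumr; apply: eq_bigr => i _; rewrite mulr_sumr.
by apply: eq_bigr => j _; rewrite mxE mulrCA.
Qed.

Lemma pairDl F G A : pair (F + G) A = pair F A + pair G A.
Proof. by rewrite pairC pairDr !(pairC A). Qed.

Lemma pairZl F A a : pair (a *: F) A = a * pair F A.
Proof. by rewrite pairC pairZr pairC. Qed.

Lemma pair0r F : pair F 0 = 0.
Proof. by rewrite -(scale0r 0) pairZr mul0r. Qed.

Lemma pair0l F : pair 0 F = 0.
Proof. by rewrite pairC pair0r. Qed.

Lemma pair_delta F i j : pair F (delta_mx i j) = F i j.
Proof.
rewrite /pair (bigD1 i) //= [X in _ + X]big1 ?addr0 => [|k /negbTE ki]; last first.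
  by apply: big1 => l _; rewrite mxE ki mulr0.
rewrite (bigD1 j) //= [X in _ + X]big1 ?addr0 => [|l /negbTE lj].
  by rewrite mxE !eqxx mulr1.
by rewrite mxE lj andbF mulr0.
Qed.

Lemma mx_norm_entry A i j : `|A i j| <= `|A|.
Proof.
rewrite [leRHS]/Num.norm /= mx_normrE.
exact: (le_bigmax 0 (fun ij : 'I_p * 'I_q => `|A ij.1 ij.2|) (i, j)).
Qed.

Lemma pair_le F A : `|pair F A| <= (\sum_i \sum_j `|F i j|) * `|A|.
Proof.
apply: le_trans (ler_norm_sum _ _ _) _; rewrite mulr_suml; apply: ler_sum => i _.
apply: le_trans (ler_norm_sum _ _ _) _; rewrite mulr_suml; apply: ler_sum => j _.
by rewrite normrM ler_wpM2l // mx_norm_entry.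
Qed.

End Pairing.

(* N dominates a multiple of the sup norm; this makes the suprema defining
   dual norms finite. *)
Definition bounded_below (R : realType) (p q : nat) (N : 'M[R]_(p, q) -> R) :=
  exists2 c, 0 < c & forall x, c * `|x| <= N x.

Section NormBoundedBelow.
Variables (R : realType) (d : nat) (N : 'rV[R]_d -> R).
Hypothesis hN : is_norm N.

Lemma is_norm_le_mx_norm x : N x <= (\sum_j N (delta_mx 0 j)) * `|x|.
Proof.
have {1}-> : x = \sum_j x 0 j *: delta_mx 0 j.
  apply/rowP => j; rewrite summxE (bigD1 j) //= big1 ?addr0 => [|i /negbTE ij].
    by rewrite !mxE !eqxx mulr1.
  by rewrite !mxE eq_sym ij andbF mulr0.
apply: le_trans (is_norm_sum hN _ _) _; rewrite mulr_suml; apply: ler_sum => j _.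
by rewrite (is_normZ hN) [leLHS]mulrC ler_wpM2l ?(is_norm_ge0 hN) // mx_norm_entry.
Qed.

Lemma is_norm_continuous : continuous N.
Proof.
pose C := \sum_j N (delta_mx 0 j) + 1.
have C_gt0 : 0 < C by rewrite ltr_pwDr // sumr_ge0 // => j _; apply: is_norm_ge0.
have lip x y : `|N x - N y| <= C * `|x - y|.
  have le_C z : N z <= C * `|z|.
    by rewrite (le_trans (is_norm_le_mx_norm z)) // ler_wpM2r // lerDl.
  have tri u v : N u - N v <= C * `|u - v|.
    rewrite lerBlDr (le_trans _ (lerD (le_C (u - v)) (lexx (N v)))) //.
    by rewrite -{1}(subrK v u) (is_normD hN).
  by rewrite ler_norml tri andbT lerNl opprB distrC tri.
move=> x; apply/(@cvgrPdist_le _ _ _ _ (nbhs_filter x)) => e e_gt0.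
apply/(@nbhs_normP _ 'rV[R]_d).
exists (e / C) => [|y /= xy]; first by rewrite /= divr_gt0.
by rewrite (le_trans (lip x y)) // -ler_pdivlMl // mulrC ltW.
Qed.

Lemma is_norm_bounded_below : bounded_below N.
Proof.
pose S := [set x : 'rV[R]_d | `|x| = 1].
have S_normalize x : x != 0 -> S (`|x|^-1 *: x) by exact: normfZV.
have N_normalize x : x != 0 -> N x = `|x| * N (`|x|^-1 *: x).
  move=> x0; rewrite (is_normZ hN) normfV normr_id mulrA mulfV ?mul1r //.
  by rewrite normr_eq0.
have [[u Su]|S0] := pselect (S !=set0); last first.
  exists 1 => // x; have [->|x0] := eqVneq x 0.
    by rewrite normr0 mulr0 (is_norm_ge0 hN).
  by case: S0; exists (`|x|^-1 *: x); apply: S_normalize.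
have S_compact : compact S.
  apply: bounded_closed_compact.
    by exists 1; split; [rewrite num_real | move=> M M1 x /= ->; rewrite ltW].
  have -> : S = Num.norm @^-1` [set 1] by [].
  apply: preimage_closed; last exact: closed_eq.
  by move=> x _; apply: norm_continuous.
have [c Sc c_min] := EVT_min_rV (ex_intro _ u Su) S_compact
  (continuous_subspaceT is_norm_continuous).
rewrite inE in Sc.
have c0 : c != 0 by apply: contra_eqN Sc => /eqP ->; rewrite normr0 eq_sym oner_eq0.
exists (N c) => [|x]; first exact: is_norm_gt0.
have [->|x0] := eqVneq x 0; first by rewrite normr0 mulr0 (is_norm_ge0 hN).
by rewrite (N_normalize x x0) mulrC ler_wpM2l // c_min // inE; apply: S_normalize.
Qed.

End NormBoundedBelow.

Section DualNorm.
Variables (R : realType) (p q : nat) (N : 'M[R]_(p, q) -> R).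
Hypotheses (hN : is_norm N) (N_lb : bounded_below N).
Implicit Types (F x : 'M[R]_(p, q)).

Lemma dual_norm_has_sup F :
  has_sup [set `|pair F x| | x in [set x | N x <= 1]].
Proof.
have [c c_gt0 hc] := N_lb.
split; first by exists `|pair F 0|, 0; rewrite //= (is_norm0 hN).
exists ((\sum_i \sum_j `|F i j|) / c) => _ [x /= Nx <-].
apply: le_trans (pair_le _ _) _; rewrite ler_wpM2l //.
  by apply: sumr_ge0 => i _; apply: sumr_ge0.
by rewrite -(ler_pM2l c_gt0) mulfV ?gt_eqF // (le_trans (hc x)).
Qed.

Lemma dual_norm_ge F x : N x <= 1 -> `|pair F x| <= dual_norm N F.
Proof. by move=> Nx; apply: (sup_upper_bound (dual_norm_has_sup F)); exists x. Qed.

Lemma dual_norm_le F b :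
  (forall x, N x <= 1 -> `|pair F x| <= b) -> dual_norm N F <= b.
Proof.
move=> h; apply: ge_sup; first by exists `|pair F 0|, 0; rewrite //= (is_norm0 hN).
by move=> _ [x /= Nx <-]; apply: h.
Qed.

Lemma dual_norm_ge0 F : 0 <= dual_norm N F.
Proof. by rewrite (le_trans _ (@dual_norm_ge F 0 _)) ?(is_norm0 hN). Qed.

Lemma pair_le_dual_norm F x : `|pair F x| <= dual_norm N F * N x.
Proof.
have [/(is_norm_eq0 hN) -> // |Nx_neq0] := eqVneq (N x) 0.
  by rewrite pair0r normr0 mulr_ge0 ?dual_norm_ge0 ?(is_norm0 hN).
have Nx_gt0 : 0 < N x by rewrite lt_def Nx_neq0 (is_norm_ge0 hN).
have := @dual_norm_ge F ((N x)^-1 *: x).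
rewrite (is_normZ hN) // pairZr normrM ger0_norm ?invr_ge0 ?(is_norm_ge0 hN) // mulVf //.
by rewrite lexx -ler_pdivlMl ?invr_gt0 // invrK mulrC => /(_ isT).
Qed.

Lemma dual_norm_approx F e : 0 < e ->
  exists x, N x <= 1 /\ dual_norm N F - e <= pair F x.
Proof.
move=> e_gt0; have [_ [x /= Nx <-] lt_e] := sup_adherent e_gt0 (dual_norm_has_sup F).
exists (Num.sg (pair F x) *: x); split; last by rewrite pairZr -normrEsg ltW.
by rewrite (is_normZ hN) // normr_sg; case: (_ != 0); rewrite ?mul1r ?mul0r.
Qed.

Lemma dual_norm_is_norm : is_norm (dual_norm N).
Proof.
split.
- exact: dual_norm_ge0.
- move=> F F0; apply/matrixP => i j; rewrite mxE.
  have := pair_le_dual_norm F (delta_mx i j).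
  by rewrite F0 mul0r pair_delta normr_le0 => /eqP.
- move=> a F; apply/le_anti/andP; split.
    apply: dual_norm_le => x Nx; rewrite pairZl normrM ler_wpM2l //.
    exact: dual_norm_ge.
  have [->|a0] := eqVneq a 0; first by rewrite normr0 mul0r dual_norm_ge0.
  rewrite -ler_pdivlMl ?normr_gt0 //; apply: dual_norm_le => x Nx.
  by rewrite ler_pdivlMl ?normr_gt0 // -normrM -pairZl dual_norm_ge.
- move=> F G; apply: dual_norm_le => x Nx; rewrite pairDl.
  by apply: le_trans (ler_normD _ _) _; apply: lerD; apply: dual_norm_ge.
Qed.

Lemma dual_norm_bounded_below : bounded_below (dual_norm N).
Proof.
pose K := 1 + \sum_(ij : 'I_p * 'I_q) N (delta_mx ij.1 ij.2).
have K_gt0 : 0 < K by rewrite ltr_pwDl // sumr_ge0 // => ij _; apply: (is_norm_ge0 hN).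
exists K^-1; rewrite ?invr_gt0 // => F; rewrite mulrC ler_pdivrMr //.
rewrite [`|F|]/Num.norm /= mx_normrE; apply/bigmax_leP; split.
  by rewrite mulr_ge0 ?dual_norm_ge0 ?ltW.
move=> [i j] _ /=; have := pair_le_dual_norm F (delta_mx i j).
rewrite pair_delta => /le_trans; apply; rewrite ler_wpM2l ?dual_norm_ge0 //.
rewrite /K (bigD1 (i, j)) //= addrCA lerDl addr_ge0 ?sumr_ge0 // => ij _.
exact: (is_norm_ge0 hN).
Qed.

End DualNorm.

Section L1Ball.
Variables (R : realType) (n : nat).
Implicit Types (x y z : 'rV[R]_n).

Lemma l1_normE x j : l1_norm x = `|x 0 j| + \sum_(i | i != j) `|x 0 i|.
Proof. by rewrite /l1_norm (bigD1 j). Qed.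

Lemma l1_norm_ge x j : `|x 0 j| <= l1_norm x.
Proof. by rewrite (l1_normE x j) lerDl sumr_ge0. Qed.

Lemma l1_normZ_delta a j : l1_norm (a *: delta_mx 0 j : 'rV[R]_n) = `|a|.
Proof.
rewrite (l1_normE _ j) big1 ?addr0 => [|i /negbTE ij]; first by rewrite !mxE !eqxx mulr1.
by rewrite !mxE ij andbF mulr0 normr0.
Qed.

Lemma norm1_mulrr (a : R) : `|a| = 1 -> a * a = 1.
Proof. by move=> a1; rewrite -expr2 -real_normK ?num_real // a1 expr1n. Qed.

Lemma ball_l1_face y j a : `|a| = 1 -> l1_norm y <= 1 -> 1 <= a * y 0 j ->
  y = a *: delta_mx 0 j.
Proof.
move=> a1 y_le1 ayj_ge1.
have ayj_le : a * y 0 j <= `|y 0 j| by rewrite (le_trans (ler_norm _)) // normrM a1 mul1r.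
have y_split := l1_normE y j.
have rest_ge0 : 0 <= \sum_(i | i != j) `|y 0 i| by apply: sumr_ge0.
have rest0 : \sum_(i | i != j) `|y 0 i| = 0 by lra.
have yj : y 0 j = a.
  by rewrite -[y 0 j]mul1r -(norm1_mulrr a1) -mulrA (_ : a * y 0 j = 1) ?mulr1 //; lra.
apply/rowP => i; rewrite !mxE; have [->|ij] := eqVneq i j; first by rewrite mulr1.
rewrite mulr0; apply/normr0_eq0.
exact: (psumr_eq0P (fun i _ => normr_ge0 (y 0 i)) rest0 ij).
Qed.

Lemma Ext_ball_l1_delta a j : `|a| = 1 -> Ext (@ball_l1 R n) (a *: delta_mx 0 j).
Proof.
move=> a1; split => [|y z t y_ball z_ball /andP[t_gt0 t_lt1] xE].
  by rewrite /ball_l1 /= l1_normZ_delta a1.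
have aj : a = t * y 0 j + (1 - t) * z 0 j.
  by move/rowP: xE => /(_ j); rewrite !mxE !eqxx mulr1.
have le1 w : l1_norm w <= 1 -> a * w 0 j <= 1.
  move=> w_le1; rewrite (le_trans (ler_norm _)) // normrM a1 mul1r.
  exact: le_trans (l1_norm_ge _ _) w_le1.
have convex1 : 1 = t * (a * y 0 j) + (1 - t) * (a * z 0 j).
  by rewrite -{1}(norm1_mulrr a1) {2}aj; ring.
have [u_ge1 v_ge1] : 1 <= a * y 0 j /\ 1 <= a * z 0 j.
  move: (le1 _ y_ball) (le1 _ z_ball) convex1.
  by move: (a * y 0 j) (a * z 0 j) => u v; split; nra.
by split; apply: ball_l1_face.
Qed.

Lemma l1_norm_sub_delta x j :
  l1_norm (x - x 0 j *: delta_mx 0 j) = l1_norm x - `|x 0 j|.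
Proof.
rewrite (l1_normE _ j) (l1_normE x j) !mxE !eqxx mulr1 subrr normr0 add0r [RHS]addrC addKr.
by apply: eq_bigr => i /negbTE ij; rewrite !mxE ij andbF mulr0 subr0.
Qed.

Lemma Ext_ball_l1_sphere x : Ext (@ball_l1 R n) x -> l1_norm x = 1 ->
  exists j, x = delta_mx 0 j \/ x = - delta_mx 0 j.
Proof.
move=> [x_ball x_ext] x1.
have [j xj0] : exists j, x 0 j != 0.
  apply/not_existsP => x0; move: x1; rewrite /l1_norm big1 => [/eqP|i _].
    by rewrite eq_sym oner_eq0.
  by have /negP := x0 i; rewrite negbK => /eqP ->; rewrite normr0.
pose a := Num.sg (x 0 j).
have a1 : `|a| = 1 by rewrite normr_sg xj0.
suff -> : x = a *: delta_mx 0 j.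
  exists j; rewrite /a; case: ltrgt0P xj0 => // [xj_gt0|xj_lt0] _.
    by left; rewrite gtr0_sg // scale1r.
  by right; rewrite ltr0_sg // scaleN1r.
have axj : a * x 0 j = `|x 0 j| by rewrite -normrEsg.
(* Unless |x_j| = 1, x = t (a e_j) + (1 - t) z with t = |x_j| and z in the ball. *)
pose t := `|x 0 j|.
have [t1|t_neq1] := eqVneq t 1; first by apply: ball_l1_face => //; rewrite axj -/t t1.
have t_gt0 : 0 < t by rewrite normr_gt0.
have t_lt1 : t < 1 by rewrite lt_neqAle t_neq1 -x1 l1_norm_ge.
have t1_neq0 : 1 - t != 0 by rewrite subr_eq0 eq_sym.
pose z := (1 - t)^-1 *: (x - x 0 j *: delta_mx 0 j).
have z_ball : ball_l1 z.
  rewrite /ball_l1 /= /z /l1_norm; under eq_bigr do rewrite mxE normrM.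
  rewrite -mulr_sumr -/(l1_norm _) l1_norm_sub_delta x1 -/t.
  by rewrite ger0_norm ?mulVf // invr_ge0 subr_ge0 ltW.
have xE : x = t *: (a *: delta_mx 0 j) + (1 - t) *: z.
  rewrite /z !scalerA mulfV // scale1r (_ : t * a = x 0 j) ?subrKC //.
  by rewrite /t mulrC mulr_sg_norm.
have [] := x_ext _ _ t _ z_ball _ xE; last by move=> ->.
- by rewrite /ball_l1 /= l1_normZ_delta a1.
- by rewrite t_gt0 t_lt1.
Qed.

Definition signed_basis (S : pred 'I_n) : set 'rV[R]_n :=
  [set g | exists2 i, S i & (g = delta_mx 0 i \/ g = - delta_mx 0 i)].

Lemma signed_basis_inj S S' : signed_basis S = signed_basis S' -> S =1 S'.
Proof.
have delta_signed i j : delta_mx 0 i = delta_mx 0 j :> 'rV[R]_n \/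
    delta_mx 0 i = - delta_mx 0 j :> 'rV[R]_n -> i = j.
  case=> /rowP /(_ i); rewrite !mxE !eqxx /=; case: eqP => // _ /eqP.
    by rewrite oner_eq0.
  by rewrite oppr0 oner_eq0.
move=> SS' i; have S_sub A B : signed_basis A = signed_basis B -> A i -> B i.
  move=> AB Ai; have : signed_basis B (delta_mx 0 i) by rewrite -AB; exists i => //; left.
  by case=> j Bj /delta_signed ->.
by apply/idP/idP; apply: S_sub; rewrite SS'.
Qed.

Lemma signed_basis_Ext S g : signed_basis S g -> l1_norm g = 1 /\ Ext (@ball_l1 R n) g.
Proof.
have unit_delta (a : R) i : `|a| = 1 ->
    l1_norm (a *: delta_mx 0 i) = 1 /\ Ext (@ball_l1 R n) (a *: delta_mx 0 i).
  by move=> a1; rewrite l1_normZ_delta a1; split => //; apply: Ext_ball_l1_delta.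
move=> [i _ [|] ->]; first by rewrite -[delta_mx 0 i]scale1r; apply/unit_delta/normr1.
by rewrite -scaleN1r; apply/unit_delta/normrN1.
Qed.

End L1Ball.

Section SpanOfSet.
Variables (R : realType) (V : vectType R).
Implicit Types (S : set V) (s : seq V) (U W : {vspace V}).

Definition is_vspan S U :=
  (forall x, S x -> x \in U) /\
  (forall W, (forall x, S x -> x \in W) -> (U <= W)%VS).

Lemma exists_spanning_seq S :
  exists2 s, (forall x, x \in s -> S x) & (forall x, S x -> x \in <<s>>%VS).
Proof.
(* A finite family in S whose span has maximal dimension spans all of S. *)
pose P m := `[< exists2 s, (forall x, x \in s -> S x) & \dim <<s>>%VS = m >].
have P0 : exists m, P m by exists 0%N; apply/asboolP; exists [::]; rewrite ?span_nil ?dimv0.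
have P_le m : P m -> (m <= \dim (fullv : {vspace V}))%N.
  by move=> /asboolP[s _ <-]; apply/dimvS/subvf.
case: (ex_maxnP P0 P_le) => _ /asboolP[s s_S <-] s_max.
exists s => // x Sx.
have x_s_S y : y \in x :: s -> S y by rewrite inE => /predU1P[->|/s_S].
have le_span : (<<s>> <= <<x :: s>>)%VS by rewrite span_cons addvSr.
have /eqP -> : <<s>>%VS == <<x :: s>>%VS.
  by rewrite eqEdim le_span s_max //; apply/asboolP; exists (x :: s).
by rewrite memv_span ?mem_head.
Qed.

Lemma span_eq_vspan S U s : is_vspan S U ->
  (forall x, x \in s -> S x) -> (forall x, S x -> x \in <<s>>%VS) -> <<s>>%VS = U.
Proof.
move=> [S_U U_min] s_S S_s; apply/subv_anti/andP; split; last exact: U_min.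
by apply/span_subvP => x /s_S /S_U.
Qed.

Lemma exists_vspan S : exists U, is_vspan S U.
Proof.
have [s s_S S_s] := exists_spanning_seq S; exists <<s>>%VS; split => // W S_W.
by apply/span_subvP => x /s_S /S_W.
Qed.

Lemma dim_spanP S U k : is_vspan S U -> Defs.dim_span S k <-> \dim U = k.
Proof.
move=> SU; split => [[s [s_S [S_s <-]]]|<-]; first by rewrite (span_eq_vspan SU).
have [s s_S S_s] := exists_spanning_seq S.
by exists s; rewrite (span_eq_vspan SU s_S S_s); split => //; split => //; case: SU.
Qed.

End SpanOfSet.

Section Columns.
Variables (R : realType) (d n : nat).
Implicit Types (A F T : 'M[R]_(d, n)) (G x : 'rV[R]_d).

Definition colv (j : 'I_n) A : 'rV[R]_d := \row_k A k j.

Definition colv_mx (j : 'I_n) G : 'M[R]_(d, n) := \matrix_(k, l) ((l == j)%:R * G 0 k).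

Fact colv_is_linear j : linear (colv j).
Proof. by move=> a A B; apply/rowP => k; rewrite !mxE. Qed.
HB.instance Definition _ j := GRing.isLinear.Build R 'M[R]_(d, n) 'rV[R]_d _ (colv j)
  (colv_is_linear j).

Fact colv_mx_is_linear j : linear (colv_mx j).
Proof. by move=> a G H; apply/matrixP => k l; rewrite !mxE mulrDr mulrCA. Qed.
HB.instance Definition _ j := GRing.isLinear.Build R 'rV[R]_d 'M[R]_(d, n) _ (colv_mx j)
  (colv_mx_is_linear j).

Lemma colv_colv_mx l j G : colv l (colv_mx j G) = if l == j then G else 0.
Proof.
by apply/rowP => k; rewrite !mxE; case: eqP => _; rewrite ?mul1r // mul0r mxE.
Qed.

Lemma colv_mxK j : cancel (colv_mx j) (colv j).
Proof. by move=> G; rewrite colv_colv_mx eqxx. Qed.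

Lemma colv_sum_colv_mx (B : 'I_n -> 'rV[R]_d) l : colv l (\sum_j colv_mx j (B j)) = B l.
Proof.
rewrite linear_sum (bigD1 l) //= colv_mxK big1 ?addr0 // => j /negbTE jl.
by rewrite colv_colv_mx eq_sym jl.
Qed.

Lemma sum_colv_mx F : F = \sum_j colv_mx j (colv j F).
Proof.
apply/matrixP => k l; rewrite summxE (bigD1 l) //= big1 ?addr0 => [|j /negbTE lj].
  by rewrite !mxE eqxx mul1r.
by rewrite !mxE eq_sym lj mul0r.
Qed.

Lemma pair_colv F A : pair F A = \sum_j pair (colv j F) (colv j A).
Proof.
rewrite /pair exchange_big /=; apply: eq_bigr => j _.
by rewrite big_ord1; apply: eq_bigr => k _; rewrite !mxE.
Qed.

Lemma mulmx_colv x A j : (x *m A) 0 j = pair (colv j A) x.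
Proof. by rewrite mxE /pair big_ord1; apply: eq_bigr => k _; rewrite mxE mulrC. Qed.

Lemma adj_delta T j : adj T (delta_mx 0 j) = colv j T.
Proof.
apply/rowP => k; rewrite /adj !mxE (bigD1 j) //= big1 ?addr0 => [|i /negbTE ij].
  by rewrite !mxE !eqxx mul1r.
by rewrite !mxE ij andbF mul0r.
Qed.

Lemma adjN T (g : 'rV[R]_n) : adj T (- g) = - adj T g.
Proof. exact: mulNmx. Qed.

Lemma adj_colv T (g : 'rV[R]_n) : adj T g = \sum_j g 0 j *: colv j T.
Proof.
by apply/rowP => k; rewrite /adj !mxE summxE; apply: eq_bigr => j _; rewrite !mxE.
Qed.

Lemma dim_sum_colv_mx (P : pred 'I_n) (U : 'I_n -> {vspace 'rV[R]_d}) :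
  \dim (\sum_(j | P j) linfun (colv_mx j) @: U j)%VS = (\sum_(j | P j) \dim (U j))%N.
Proof.
have /directvP -> : directv (\sum_(j | P j) linfun (colv_mx j) @: U j)%VS.
  apply/directv_sum_independent => F F_U F_sum0 l Pl.
  have F_colv j : P j -> F j = colv_mx j (colv j (F j)).
    by move=> Pj; have /memv_imgP[G _ ->] := F_U j Pj; rewrite lfunE /= colv_mxK.
  have := congr1 (colv l) F_sum0; rewrite linear_sum linear0 (bigD1 l) //=.
  rewrite big1 ?addr0 => [Fl0|j /andP[Pj jl]]; first by rewrite F_colv // Fl0 linear0.
  by rewrite F_colv // colv_colv_mx eq_sym (negbTE jl).
apply: eq_bigr => j _; apply: limg_dim_eq; apply/eqP; rewrite -subv0.
apply/subvP => G; rewrite memv_cap memv_ker lfunE /= memv0 => /andP[_ /eqP G0].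
by rewrite -(colv_mxK j G) G0 linear0.
Qed.

End Columns.

Section OperatorNorm.
Variables (R : realType) (d n : nat) (NX : 'rV[R]_d -> R).
Hypothesis hN : is_norm NX.
Implicit Types (A F T : 'M[R]_(d, n)) (G x : 'rV[R]_d).

Local Notation phi := (dual_norm NX).
Local Notation phis := (dual_norm (dual_norm NX)).

Let NX_lb : bounded_below NX := is_norm_bounded_below hN.
Let phi_norm : is_norm phi := dual_norm_is_norm hN NX_lb.
Let phi_lb : bounded_below phi := dual_norm_bounded_below hN NX_lb.
Let phis_norm : is_norm phis := dual_norm_is_norm phi_norm phi_lb.

Lemma Lnorm_colvE A : Lnorm NX A = \big[Num.max/0]_j phi (colv j A).
Proof.
have ne : [set linf_norm (x *m A) | x in [set x | NX x <= 1]] !=set0.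
  by exists (linf_norm (0 *m A)), 0; rewrite //= (is_norm0 hN).
have col_le x : NX x <= 1 -> linf_norm (x *m A) <= \big[Num.max/0]_j phi (colv j A).
  move=> x_le1; apply/bigmax_leP; split => [|j _]; first exact: bigmax_ge_id.
  rewrite mulmx_colv (le_trans (dual_norm_ge hN NX_lb _ x_le1)) //.
  exact: (le_bigmax 0 (fun j => phi (colv j A))).
apply/le_anti/andP; split; first by apply: ge_sup => // _ [x /= /col_le + <-].
have has_sup_A : has_sup [set linf_norm (x *m A) | x in [set x | NX x <= 1]].
  by split => //; exists (\big[Num.max/0]_j phi (colv j A)) => _ [x /= /col_le + <-].
apply/bigmax_leP; split => [|j _].
  by rewrite (le_trans _ (sup_upper_bound has_sup_A (ex_intro2 _ _ 0 _ erefl)))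
    ?bigmax_ge_id //= (is_norm0 hN).
apply: (dual_norm_le hN) => x x_le1; rewrite -mulmx_colv.
apply: le_trans (sup_upper_bound has_sup_A (ex_intro2 _ _ x x_le1 erefl)).
exact: (le_bigmax 0 (fun j => `|(x *m A) 0 j|)).
Qed.

Lemma Lnorm_colv_le A j : phi (colv j A) <= Lnorm NX A.
Proof. by rewrite Lnorm_colvE; apply: (le_bigmax 0 (fun j => phi (colv j A))). Qed.

Lemma Lnorm_is_norm : is_norm (Lnorm NX : 'M[R]_(d, n) -> R).
Proof.
split.
- by move=> A; rewrite Lnorm_colvE bigmax_ge_id.
- move=> A A0; apply/matrixP => k j; rewrite mxE.
  suff /(is_norm_eq0 phi_norm)/rowP/(_ k) : phi (colv j A) = 0 by rewrite !mxE.
  by apply/le_anti; rewrite (is_norm_ge0 phi_norm) -A0 Lnorm_colv_le.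
- move=> a A; rewrite !Lnorm_colvE; under eq_bigr do rewrite linearZ (is_normZ phi_norm).
  elim/big_rec2: _ => [|j y z _ ->]; first by rewrite mulr0.
  by rewrite maxr_pMr.
- move=> A B; rewrite [Lnorm NX (A + B)]Lnorm_colvE; apply/bigmax_leP.
  split => [|j _]; first by rewrite addr_ge0 // Lnorm_colvE bigmax_ge_id.
  by rewrite linearD (le_trans (is_normD phi_norm _ _)) // lerD ?Lnorm_colv_le.
Qed.

Lemma Lnorm_bounded_below : bounded_below (Lnorm NX : 'M[R]_(d, n) -> R).
Proof.
have [c c_gt0 c_le] := phi_lb; exists c => // A.
rewrite -ler_pdivlMl // [`|A|]/Num.norm /= mx_normrE; apply/bigmax_leP; split.
  by rewrite mulr_ge0 ?invr_ge0 ?(ltW c_gt0) ?(is_norm_ge0 Lnorm_is_norm).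
move=> [k j] _ /=; rewrite ler_pdivlMl // (le_trans _ (Lnorm_colv_le A j)) //.
rewrite (le_trans _ (c_le _)) // ler_wpM2l ?(ltW c_gt0) //.
by have := mx_norm_entry (colv j A) 0 k; rewrite mxE.
Qed.

Lemma dual_Lnorm_le F : dual_norm (Lnorm NX) F <= \sum_j phis (colv j F).
Proof.
apply: (dual_norm_le Lnorm_is_norm) => A A_le1; rewrite pair_colv.
apply: le_trans (ler_norm_sum _ _ _) _; apply: ler_sum => j _.
rewrite (le_trans (pair_le_dual_norm phi_norm phi_lb _ _)) //.
by rewrite ler_piMr ?(is_norm_ge0 phis_norm) // (le_trans (Lnorm_colv_le A j)).
Qed.

Lemma dual_Lnorm_ge F : \sum_j phis (colv j F) <= dual_norm (Lnorm NX) F.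
Proof.
(* Test F against the matrix whose columns almost norm the columns of F. *)
apply/ler_addgt0Pr => e e_gt0.
have n1_gt0 : 0 < n%:R + 1 :> R by rewrite ltr_pwDr // ler0n.
have eps_gt0 : 0 < e / (n%:R + 1) by rewrite divr_gt0.
have [B B_approx] := fin_all_exists (fun j =>
  dual_norm_approx phi_norm phi_lb (colv j F) eps_gt0).
pose M := \sum_j colv_mx j (B j).
have M_le1 : Lnorm NX M <= 1.
  rewrite Lnorm_colvE; apply/bigmax_leP; split => // j _.
  by rewrite colv_sum_colv_mx; case: (B_approx j).
have pair_le : \sum_j pair (colv j F) (colv j M) <= dual_norm (Lnorm NX) F.
  rewrite -pair_colv (le_trans (ler_norm _)) //.
  exact: dual_norm_ge Lnorm_is_norm Lnorm_bounded_below _ _ M_le1.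
have approx_le : \sum_j (phis (colv j F) - e / (n%:R + 1)) <=
    \sum_j pair (colv j F) (colv j M).
  by apply: ler_sum => j _; rewrite colv_sum_colv_mx; case: (B_approx j).
have n_eps_le : e / (n%:R + 1) *+ n <= e.
  by rewrite -mulr_natr mulrAC ler_pdivrMr // ler_wpM2l ?(ltW e_gt0) // lerDl.
move: (le_trans approx_le pair_le); rewrite sumrB sumr_const card_ord.
lra.
Qed.

Lemma dual_LnormE F : dual_norm (Lnorm NX) F = \sum_j phis (colv j F).
Proof. by apply/le_anti; rewrite dual_Lnorm_le dual_Lnorm_ge. Qed.

(* The indices j with ||T^* e_j|| = 1, since colv j T = T^* e_j (adj_delta). *)
Definition norming_cols T : pred 'I_n := fun j => phi (colv j T) == 1.

Lemma Jset_colv_mx T j G : Jset phi (colv j T) G -> Jset (Lnorm NX) T (colv_mx j G).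
Proof.
move=> [G1 GT]; split.
  rewrite dual_LnormE (bigD1 j) //= colv_mxK big1 ?addr0 // => l /negbTE lj.
  by rewrite colv_colv_mx lj (is_norm0 phis_norm).
rewrite pair_colv (bigD1 j) //= colv_mxK big1 ?addr0 // => l /negbTE lj.
by rewrite colv_colv_mx lj pair0l.
Qed.

Lemma Jset_pair_colv T F j : Lnorm NX T = 1 -> Jset (Lnorm NX) T F ->
  pair (colv j F) (colv j T) = phis (colv j F).
Proof.
move=> T1 [F1 FT]; apply/eqP; rewrite eq_sym -subr_eq0; apply/eqP.
have pair_le l : pair (colv l F) (colv l T) <= phis (colv l F).
  rewrite (le_trans (ler_norm _)) // (le_trans (pair_le_dual_norm phi_norm phi_lb _ _)) //.
  by rewrite ler_piMr ?(is_norm_ge0 phis_norm) // -T1 Lnorm_colv_le.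
apply: (@psumr_eq0P _ _ xpredT (fun l => phis (colv l F) - pair (colv l F) (colv l T)))
  => // [l _|]; first by rewrite subr_ge0.
by rewrite sumrB -dual_LnormE -pair_colv F1 FT subrr.
Qed.

Lemma Jset_colv T F j : Lnorm NX T = 1 -> Jset (Lnorm NX) T F -> colv j F != 0 ->
  norming_cols T j /\ Jset phi (colv j T) ((phis (colv j F))^-1 *: colv j F).
Proof.
move=> T1 JF Fj0; have Fj_pair := Jset_pair_colv j T1 JF.
have Fj_gt0 : 0 < phis (colv j F) by apply: is_norm_gt0.
split; last split.
- rewrite /norming_cols eq_le -{1}T1 Lnorm_colv_le /= -(ler_pM2l Fj_gt0) mulr1.
  by rewrite -{1}Fj_pair (le_trans (ler_norm _)) // pair_le_dual_norm.
- by rewrite (is_normZ phis_norm) ger0_norm ?invr_ge0 ?ltW // mulVf ?gt_eqF.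
- by rewrite pairZl Fj_pair mulVf ?gt_eqF.
Qed.

Lemma is_vspan_Jset T (U : 'I_n -> {vspace 'rV[R]_d}) : Lnorm NX T = 1 ->
  (forall j, norming_cols T j -> is_vspan (Jset phi (colv j T)) (U j)) ->
  is_vspan (Jset (Lnorm NX) T)
    (\sum_(j | norming_cols T j) linfun (colv_mx j) @: U j)%VS.
Proof.
move=> T1 U_span; split => [F JF|W J_W].
  rewrite (sum_colv_mx F) (bigID (norming_cols T)) /= [X in _ + X]big1 ?addr0.
    apply: memv_sumr => j Tj; rewrite -lfunE memv_img //.
    have [->|Fj0] := eqVneq (colv j F) 0; first exact: mem0v.
    have [_ J_Fj] := Jset_colv T1 JF Fj0.
    have Fj_neq0 : phis (colv j F) != 0 by rewrite gt_eqF ?is_norm_gt0.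
    by rewrite -(scalerKV Fj_neq0 (colv j F)) memvZ //; case: (U_span j Tj) => + _; apply.
  move=> j /negP Tj; have [->|Fj0] := eqVneq (colv j F) 0; first by rewrite linear0.
  by case: Tj; have [] := Jset_colv T1 JF Fj0.
apply/subv_sumP => j Tj; apply/subvP => _ /memv_imgP[G G_U ->].
rewrite memv_preim; move: G G_U; apply/subvP; case: (U_span j Tj) => _; apply.
by move=> G JG; rewrite -memv_preim lfunE /=; apply/J_W/Jset_colv_mx.
Qed.

Lemma exists_norming_col T : Lnorm NX T = 1 -> exists j, norming_cols T j.
Proof.
move=> T1; apply: contrapT => /forallNP no_col; have := Lnorm_colvE T.
rewrite T1 => /eqP; apply/negP; rewrite neq_lt; apply/orP; right.
apply/bigmax_ltP; split => // j _; rewrite lt_neqAle -{2}T1 Lnorm_colv_le andbT.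
by apply/negP => /no_col.
Qed.

Lemma adj_le_l1_norm T (g : 'rV[R]_n) : Lnorm NX T = 1 -> phi (adj T g) <= l1_norm g.
Proof.
move=> T1; rewrite adj_colv (le_trans (is_norm_sum phi_norm _ _)) //.
apply: ler_sum => j _; rewrite (is_normZ phi_norm) ler_piMr //.
by rewrite -T1 Lnorm_colv_le.
Qed.

Lemma opnorm_adj T : Lnorm NX T = 1 -> opnorm (@l1_norm R n) phi (adj T) = 1.
Proof.
move=> T1; pose E := [set phi (adj T g) | g in [set g | l1_norm g <= 1]].
have E_ub : ubound E 1.
  by move=> _ [g /= g_le1 <-]; rewrite (le_trans (adj_le_l1_norm _ T1)).
have [j /eqP Tj] := exists_norming_col T1.
have E1 : E 1.
  exists (delta_mx 0 j); rewrite /= ?adj_delta //.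
  by rewrite -[delta_mx 0 j]scale1r l1_normZ_delta normr1.
apply/le_anti/andP; split; first exact: ge_sup (ex_intro _ 1 E1) E_ub.
exact: sup_upper_bound (conj (ex_intro _ 1 E1) (ex_intro _ 1 E_ub)) _ E1.
Qed.

Lemma Mset_adj_Ext T : Lnorm NX T = 1 ->
  Mset (@l1_norm R n) phi (adj T) `&` Ext (@ball_l1 R n) = signed_basis (norming_cols T).
Proof.
move=> T1; rewrite /Mset opnorm_adj //; apply/seteqP; split => g.
  move=> [[g1 Tg1] /Ext_ball_l1_sphere /(_ g1)[j g_pm]]; exists j => //.
  by case: g_pm Tg1 => ->; rewrite ?adjN adj_delta ?(is_normN phi_norm) => /eqP.
move=> g_pm; have [g1 g_Ext] := signed_basis_Ext g_pm; split => //; split => //.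
by case: g_pm => j /eqP Tj [] ->; rewrite ?adjN adj_delta ?(is_normN phi_norm).
Qed.

End OperatorNorm.

Theorem corollary3p8 (R : realType) (d n : nat) (NX : 'rV[R]_d -> R)
    (T : 'M[R]_(d, n)) (k : nat) :
  is_norm NX -> Lnorm NX T = 1 ->
  (k_smooth (Lnorm NX) T k <->
   exists S : pred 'I_n,
     (exists i, S i) /\
     Mset (@l1_norm R n) (dual_norm NX) (adj T) `&` Ext (@ball_l1 R n)
       = [set g | exists2 i, S i & (g = delta_mx 0 i \/ g = - delta_mx 0 i)] /\
     exists m : 'I_n -> nat,
       (forall i, S i -> k_smooth (dual_norm NX) (adj T (delta_mx 0 i)) (m i)) /\
       (\sum_(i < n | S i) m i)%N = k).
Proof.
move=> hN T1.
have [U U_span] := choice (fun j => exists_vspan (Jset (dual_norm NX) (colv j T))).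
have JT_span := is_vspan_Jset hN T1 (fun j _ => U_span j).
rewrite /k_smooth (dim_spanP _ JT_span) dim_sum_colv_mx.
split => [[_ <-]|[S [_ [MS [m [m_smooth <-]]]]]].
  exists (norming_cols NX T); split; first exact: exists_norming_col.
  split; first exact: Mset_adj_Ext.
  exists (fun j => \dim (U j)); split => // i Ti; rewrite adj_delta.
  by split; [exact/eqP | exact/(dim_spanP _ (U_span i))].
have S_cols : S =1 norming_cols NX T.
  by apply: (@signed_basis_inj R); rewrite -(Mset_adj_Ext hN T1) MS.
split => //; rewrite (eq_bigl _ _ S_cols); apply: eq_bigr => i Ti.
have [_] := m_smooth i (etrans (S_cols i) Ti).
by rewrite adj_delta => /(dim_spanP _ (U_span i)).
Qed.
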